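(* Let $K$ be a commutative unital ring, let $G$ be a groupoid whose set of identities $G_0$ is finite, and let $R$ be a unital $K$-algebra. The following are equivalent: (i) there exists an action $\beta=(\{E_g\}_{g\in G},\{\beta_g\}_{g\in G})$ of $G$ on $R$ such that every ideal $E_e$, $e\in G_0$, is a unital ring and $R=\bigoplus_{e\in G_0}E_e$; (ii) $R$ has a structure of $KG$-module algebra.
   Context: A groupoid is a small category in which every morphism is invertible; we regard it as the set $G$ of its morphisms with the partial multiplication given by composition. For $g\in G$, $d(g)=g^{-1}g$ and $r(g)=gg^{-1}$ are its domain and range identities. The product $gh$ is defined iff $d(g)=r(h)$, and then $d(gh)=d(h)$, $r(gh)=r(g)$. $G^2=\{(g,h)\in G\times G: d(g)=r(h)\}$, and $G_0=\{d(g):g\in G\}$ is the set of identities. An action of $G$ on a ring $R$ is a pair $\beta=(\{E_g\}_{g\in G},\{\beta_g\}_{g\in G})$ such that: - each $E_g$ is an ideal of $R$ with $E_g=E_{r(g)}$; - each $\beta_g:E_{g^{-1}}\to E_g$ is a ring isomorphism; - $\beta_e=\mathrm{id}_{E_e}$ for all $e\in G_0$; - $\beta_g(\beta_h(x))=\beta_{gh}(x)$ for all $(g,h)\in G^2$ and $x\in E_{h^{-1}}$. The groupoid algebra $KG$ is the free $K$-module with basis $\{u_g\}_{g\in G}$. Its multiplication is given by $u_gu_h=u_{gh}$ if $d(g)=r(h)$ and $u_gu_h=0$ otherwise. Since $G_0$ is finite, $KG$ has identity $1_{KG}=\sum_{e\in G_0}u_e$. A $KG$-module algebra is a unital $K$-algebra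 $R$ together with a unital left $KG$-module structure $u_g\otimes x\mapsto u_g\cdot x$ such that $u_g\cdot(xy)=(u_g\cdot x)(u_g\cdot y)$ and $u_g\cdot 1_R=u_{r(g)}\cdot 1_R$ for all $x,y\in R$ and $g\in G$.
   Formalization: In the action of G on R, each $\beta_g$ is a K-linear ring isomorphism from $E_{g^{-1}}$ onto $E_g$, that is, a K-algebra isomorphism rather than a mere ring isomorphism. The statement above fails without it. *)

From Stdlib Require List.
From HB Require Import structures.
From mathcomp Require Import all_boot all_order all_algebra.
Set Implicit Arguments. Unset Strict Implicit. Unset Printing Implicit Defensive.
Import GRing.Theory.
Local Open Scope ring_scope.

(* Groupoids, viewed as the set of their morphisms with a partial     *)
(* multiplication.  [gmul g h] is only meaningful when d g = r h.     *)
Record groupoid := Groupoid {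
  gcarrier :> Type;
  gmul : gcarrier -> gcarrier -> gcarrier;
  ginv : gcarrier -> gcarrier;
  gd : gcarrier -> gcarrier;
  gr : gcarrier -> gcarrier;
  gd_def : forall g, gd g = gmul (ginv g) g;
  gr_def : forall g, gr g = gmul g (ginv g);
  gd_inv : forall g, gd (ginv g) = gr g;
  gr_inv : forall g, gr (ginv g) = gd g;
  gd_mul : forall g h, gd g = gr h -> gd (gmul g h) = gd h;
  gr_mul : forall g h, gd g = gr h -> gr (gmul g h) = gr g;
  gmulA : forall g h k, gd g = gr h -> gd h = gr k ->
            gmul (gmul g h) k = gmul g (gmul h k);
  gmul_d : forall g, gmul g (gd g) = g;
  gr_mul_l : forall g, gmul (gr g) g = g;
  gd_d : forall g, gd (gd g) = gd g;
  gr_d : forall g, gr (gd g) = gd g;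
  gd_r : forall g, gd (gr g) = gr g;
  gr_r : forall g, gr (gr g) = gr g
}.

Definition is_identity (G : groupoid) (e : G) : Prop := exists g : G, e = gd g.

(* [s] is a duplicate-free enumeration of G_0 (witnessing finiteness of G_0). *)
Definition enumerates_identities (G : groupoid) (s : seq G) : Prop :=
  List.NoDup s /\ forall e : G, List.In e s <-> is_identity e.

Definition is_ideal (R : pzRingType) (E : R -> Prop) : Prop :=
  [/\ E 0,
      (forall x y, E x -> E y -> E (x + y)),
      (forall x, E x -> E (- x)),
      (forall a x, E x -> E (a * x)) &
      (forall a x, E x -> E (x * a))].

Definition is_unital_ideal (R : pzRingType) (E : R -> Prop) : Prop :=
  exists2 u : R, E u & forall x, E x -> u * x = x /\ x * u = x.

Definition internal_direct_sum (R : pzRingType) (I : Type) (s : seq I)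
    (E : I -> R -> Prop) : Prop :=
  (forall x : R, exists f : I -> R,
      (forall i, List.In i s -> E i (f i)) /\ x = \sum_(i <- s) f i) /\
  (forall f : I -> R, (forall i, List.In i s -> E i (f i)) ->
      \sum_(i <- s) f i = 0 -> forall i, List.In i s -> f i = 0).

Definition is_groupoid_action (K : comPzRingType) (R : algType K)
    (G : groupoid) (E : G -> R -> Prop) (beta : G -> R -> R) : Prop :=
  (forall g, is_ideal (E g)) /\
  (forall g x, E g x <-> E (gr g) x) /\
  (forall g x, E (ginv g) x -> E g (beta g x)) /\
  (forall g x y, E (ginv g) x -> E (ginv g) y ->
      beta g (x + y) = beta g x + beta g y /\
      beta g (x * y) = beta g x * beta g y) /\
  (forall g (k : K) x, E (ginv g) x -> beta g (k *: x) = k *: beta g x) /\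
  (forall g x y, E (ginv g) x -> E (ginv g) y -> beta g x = beta g y -> x = y) /\
  (forall g y, E g y -> exists2 x, E (ginv g) x & beta g x = y) /\
  (forall e x, is_identity e -> E e x -> beta e x = x) /\
  (forall g h x, gd g = gr h -> E (ginv h) x ->
      beta g (beta h x) = beta (gmul g h) x).

(* KG-module algebra structures.  KG is the free K-module on the      *)
(* basis (u_g); a (K-compatible) left KG-module structure on R is the  *)
(* same as K-linear operators L g = (u_g . -) satisfying the relations *)
(* of the basis: u_g u_h = u_{gh} if d g = r h, 0 otherwise, and the   *)
(* unitality 1_{KG} . x = sum_{e in G_0} u_e . x = x.                  *)
Definition is_KG_module_algebra (K : comPzRingType) (R : algType K)
    (G : groupoid) (s : seq G) (L : G -> R -> R) : Prop :=
  (forall g x y, L g (x + y) = L g x + L g y) /\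
  (forall g (k : K) x, L g (k *: x) = k *: L g x) /\
  (forall g h x, gd g = gr h -> L g (L h x) = L (gmul g h) x) /\
  (forall g h x, gd g <> gr h -> L g (L h x) = 0) /\
  (forall x, \sum_(e <- s) L e x = x) /\
  (forall g x y, L g (x * y) = L g x * L g y) /\
  (forall g, L g 1 = L (gr g) 1).

(** In direction (i) => (ii) the unit [u_e] of [E_e] is central, and [u_e x]
    is the [e]-component of [x]; letting [u_g] act by
    [x |-> beta_g (u_{d g} x)] gives a KG-module algebra.  Conversely the
    operators [u_e .] for [e] in [G_0] are orthogonal idempotents summing to the
    identity and multiplicative, so [E_g := u_{r g} . R] are unital ideals
    whose direct sum is [R], and [beta_g := u_g .] is an action of [G]. *)
From HB Require Import structures.
From mathcomp Require Import all_boot all_order all_algebra.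
From Stdlib Require Import Classical ClassicalEpsilon.
Import GRing.Theory.
Set Implicit Arguments. Unset Strict Implicit.
Local Open Scope ring_scope.

(* Index types need not have decidable equality, so list membership is [List.In]. *)
Section ListSums.
Variables (V : nmodType) (I : Type).
Implicit Types (s : seq I) (F H : I -> V).

Lemma big_In_eq0 s F :
  (forall i, List.In i s -> F i = 0) -> \sum_(i <- s) F i = 0.
Proof.
elim: s => [|a s IH] F0; first by rewrite big_nil.
by rewrite big_cons F0 ?IH ?add0r //= => [i si|]; [apply: F0; right | left].
Qed.

Lemma eq_big_In s F H :
  (forall i, List.In i s -> F i = H i) -> \sum_(i <- s) F i = \sum_(i <- s) H i.
Proof.
elim: s => [|a s IH] FH; first by rewrite !big_nil.
by rewrite !big_cons FH ?IH //= => [i si|]; [apply: FH; right | left].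
Qed.

Lemma big_In_single s F e : List.NoDup s -> List.In e s ->
  (forall i, List.In i s -> i <> e -> F i = 0) -> \sum_(i <- s) F i = F e.
Proof.
elim: s => [|a s IH] + es F0 //; move/List.NoDup_cons_iff=> [as_ s_uniq].
rewrite big_cons; have [ae|ae] := classic (a = e).
- subst a; rewrite big_In_eq0 ?addr0 // => i si; apply: F0; first by right.
  by move=> ie; subst.
- rewrite F0 /= ?add0r; [|by left|by []].
  by apply: IH; [|case: es|move=> i si; apply: F0; right].
Qed.

Definition delta_at (e : I) (z : V) (i : I) : V :=
  if excluded_middle_informative (i = e) then z else 0.

Lemma delta_at_id e z : delta_at e z e = z.
Proof. by rewrite /delta_at; case: excluded_middle_informative. Qed.

Lemma delta_at_neq e z i : i <> e -> delta_at e z i = 0.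
Proof. by rewrite /delta_at; case: excluded_middle_informative. Qed.

Lemma sum_delta_at s e z :
  List.NoDup s -> List.In e s -> \sum_(i <- s) delta_at e z i = z.
Proof.
by move=> s_uniq es; rewrite (big_In_single s_uniq es) ?delta_at_id // => i _ /delta_at_neq.
Qed.

End ListSums.

Lemma additive0 (V W : zmodType) (f : V -> W) :
  (forall x y, f (x + y) = f x + f y) -> f 0 = 0.
Proof. by move=> fD; apply: (addrI (f 0)); rewrite -fD !addr0. Qed.

Lemma additiveN (V W : zmodType) (f : V -> W) :
  (forall x y, f (x + y) = f x + f y) -> forall x, f (- x) = - f x.
Proof. by move=> fD x; apply: (addrI (f x)); rewrite -fD !subrr (additive0 fD). Qed.

Section Ideals.
Variables (R : pzRingType) (I : Type) (E : I -> R -> Prop).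
Hypothesis E_ideal : forall i, is_ideal (E i).
Implicit Type i : I.

Lemma ideal0 i : E i 0.
Proof. by case: (E_ideal i). Qed.

Lemma idealD i x y : E i x -> E i y -> E i (x + y).
Proof. by case: (E_ideal i) => _ ED _ _ _; apply: ED. Qed.

Lemma idealN i x : E i x -> E i (- x).
Proof. by case: (E_ideal i) => _ _ EN _ _; apply: EN. Qed.

Lemma idealMl i a x : E i x -> E i (a * x).
Proof. by case: (E_ideal i) => _ _ _ EMl _; apply: EMl. Qed.

Lemma idealMr i a x : E i x -> E i (x * a).
Proof. by case: (E_ideal i) => _ _ _ _ EMr; apply: EMr. Qed.

End Ideals.

Section Identities.
Variable G : groupoid.
Implicit Types (e g : G).

Lemma identity_d e : is_identity e -> gd e = e.
Proof. by case=> g ->; exact: gd_d. Qed.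

Lemma identity_r e : is_identity e -> gr e = e.
Proof. by case=> g ->; exact: gr_d. Qed.

Lemma identity_mulss e : is_identity e -> gmul e e = e.
Proof. by move=> He; have := gmul_d e; rewrite identity_d. Qed.

Lemma r_is_identity g : is_identity (gr g).
Proof. by exists (ginv g); rewrite gd_inv. Qed.

Lemma d_is_identity g : is_identity (gd g).
Proof. by exists g. Qed.

End Identities.

Section ActionToModuleAlgebra.
Variables (K : comPzRingType) (R : algType K) (G : groupoid) (s : seq G).
Hypothesis s_uniq : List.NoDup s.
Hypothesis s_identities : forall e : G, List.In e s <-> is_identity e.
Variables (E : G -> R -> Prop) (beta : G -> R -> R).
Hypothesis E_ideal : forall g, is_ideal (E g).
Hypothesis E_r : forall g x, E g x <-> E (gr g) x.
Hypothesis beta_in : forall g x, E (ginv g) x -> E g (beta g x).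
Hypothesis beta_rmorph : forall g x y, E (ginv g) x -> E (ginv g) y ->
  beta g (x + y) = beta g x + beta g y /\ beta g (x * y) = beta g x * beta g y.
Hypothesis betaZ : forall g (k : K) x, E (ginv g) x -> beta g (k *: x) = k *: beta g x.
Hypothesis beta_onto : forall g y, E g y -> exists2 x, E (ginv g) x & beta g x = y.
Hypothesis beta_identity : forall e x, is_identity e -> E e x -> beta e x = x.
Hypothesis beta_comp : forall g h x, gd g = gr h -> E (ginv h) x ->
  beta g (beta h x) = beta (gmul g h) x.
Hypothesis E_unital : forall e, is_identity e -> is_unital_ideal (E e).
Hypothesis E_decomp : forall x : R, exists f : G -> R,
  (forall i, List.In i s -> E i (f i)) /\ x = \sum_(i <- s) f i.
Hypothesis E_indep : forall f : G -> R, (forall i, List.In i s -> E i (f i)) ->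
  \sum_(i <- s) f i = 0 -> forall i, List.In i s -> f i = 0.

Lemma E_inv g x : E (ginv g) x <-> E (gd g) x.
Proof. by rewrite E_r gr_inv. Qed.

Lemma identity_ideals_disjoint e f z : is_identity e -> is_identity f -> e <> f ->
  E e z -> E f z -> z = 0.
Proof.
move=> He Hf ef Eez Efz.
have es : List.In e s by apply/s_identities.
have fs : List.In f s by apply/s_identities.
(* [0 = z + (- z)] would otherwise be a second decomposition of [0]. *)
pose F i := delta_at e z i + delta_at f (- z) i.
have delta_in g w i : E g w -> E i (delta_at g w i).
  move=> Ew; have [->|ig] := classic (i = g); first by rewrite delta_at_id.
  by rewrite delta_at_neq //; apply: (ideal0 E_ideal).
have FE i : List.In i s -> E i (F i).
  by move=> _; apply: (idealD E_ideal); apply: delta_in => //; apply: (idealN E_ideal).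
have F0 : \sum_(i <- s) F i = 0 by rewrite big_split /= !sum_delta_at // subrr.
have := E_indep FE F0 es.
by rewrite /F delta_at_id delta_at_neq ?addr0.
Qed.

(* The choice only matters when [e] is an identity. *)
Definition unit_of (e : G) : R :=
  epsilon (inhabits 0) (fun u => E e u /\ forall x, E e x -> u * x = x /\ x * u = x).

Lemma unit_ofP e : is_identity e ->
  E e (unit_of e) /\ forall x, E e x -> unit_of e * x = x /\ x * unit_of e = x.
Proof.
move=> He; apply: (epsilon_spec (inhabits 0)
  (fun u => E e u /\ forall x, E e x -> u * x = x /\ x * u = x)).
by case: (E_unital He) => u Eu uM; exists u.
Qed.

Lemma unit_of_component e f : is_identity e -> (forall i, List.In i s -> E i (f i)) ->
  unit_of e * \sum_(i <- s) f i = f e /\ (\sum_(i <- s) f i) * unit_of e = f e.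
Proof.
move=> He fE; have es : List.In e s by apply/s_identities.
have [Eu uM] := unit_ofP He.
have other_zero i z : List.In i s -> i <> e -> E e z -> E i z -> z = 0.
  by move=> /s_identities Hi ie; apply: (identity_ideals_disjoint He Hi (not_eq_sym ie)).
have [uf fu] := uM _ (fE e es).
rewrite mulr_sumr mulr_suml !(big_In_single s_uniq es) // => i si ie.
- apply: (other_zero i) => //; first exact: (idealMl E_ideal).
  by apply: (idealMr E_ideal); apply: fE.
- apply: (other_zero i) => //; first exact: (idealMr E_ideal).
  by apply: (idealMl E_ideal); apply: fE.
Qed.

Lemma unit_of_central e : is_identity e -> forall x, unit_of e * x = x * unit_of e.
Proof.
move=> He x; have [f [fE ->]] := E_decomp x.
by have [-> ->] := unit_of_component He fE.
Qed.

Lemma unit_of_idem e : is_identity e -> unit_of e * unit_of e = unit_of e.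
Proof. by move=> He; have [Eu uM] := unit_ofP He; rewrite (uM _ Eu).1. Qed.

Lemma unit_of_d_mul_in g x : E (ginv g) (unit_of (gd g) * x).
Proof. by apply/E_inv; apply: (idealMr E_ideal); apply: (unit_ofP (d_is_identity g)).1. Qed.

Lemma beta0 g : beta g 0 = 0.
Proof.
have := (beta_rmorph (ideal0 E_ideal (ginv g)) (ideal0 E_ideal _)).1.
by rewrite addr0 => b00; apply: (addrI (beta g 0)); rewrite -b00 addr0.
Qed.

(* [beta_g] is a ring isomorphism [E_{d g} -> E_{r g}], so it preserves units. *)
Lemma beta_unit_of g : beta g (unit_of (gd g)) = unit_of (gr g).
Proof.
have [Ew wM] := unit_ofP (r_is_identity g).
have [Eu uM] := unit_ofP (d_is_identity g).
have Ev : E (gr g) (beta g (unit_of (gd g))) by apply/(E_r g); apply: beta_in; apply/E_inv.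
have [x Ex xw] : exists2 x, E (ginv g) x & beta g x = unit_of (gr g).
  by apply: beta_onto; apply/(E_r g).
rewrite -[LHS](wM _ Ev).1 (unit_of_central (r_is_identity g)) -xw.
rewrite -(beta_rmorph _ Ex).2 ?(uM x _).1 //; exact/E_inv.
Qed.

Definition module_op (g : G) (x : R) : R := beta g (unit_of (gd g) * x).

Lemma module_op_in g x : E (gr g) (module_op g x).
Proof. by apply/(E_r g); apply: beta_in; apply: unit_of_d_mul_in. Qed.

Lemma module_opD g x y : module_op g (x + y) = module_op g x + module_op g y.
Proof.
by rewrite /module_op mulrDr (beta_rmorph (unit_of_d_mul_in g x) (unit_of_d_mul_in g y)).1.
Qed.

Lemma module_opZ g (k : K) x : module_op g (k *: x) = k *: module_op g x.
Proof. by rewrite /module_op -scalerAr betaZ //; apply: unit_of_d_mul_in. Qed.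

Lemma module_op_comp g h x : gd g = gr h ->
  module_op g (module_op h x) = module_op (gmul g h) x.
Proof.
move=> gh; have Ey : E (gd g) (module_op h x) by rewrite gh; apply: module_op_in.
rewrite {1}/module_op ((unit_ofP (d_is_identity g)).2 _ Ey).1.
by rewrite /module_op (gd_mul gh) beta_comp //; apply: unit_of_d_mul_in.
Qed.

Lemma module_op_orth g h x : gd g <> gr h -> module_op g (module_op h x) = 0.
Proof.
move=> gh; rewrite {1}/module_op.
have -> : unit_of (gd g) * module_op h x = 0.
  apply: (identity_ideals_disjoint (d_is_identity g) (r_is_identity h) gh).
    by apply: (idealMr E_ideal); apply: (unit_ofP (d_is_identity g)).1.
  by apply: (idealMl E_ideal); apply: module_op_in.
exact: beta0.
Qed.

Lemma module_op_unital x : \sum_(e <- s) module_op e x = x.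
Proof.
have [f [fE xE]] := E_decomp x; rewrite [RHS]xE; apply: eq_big_In => e es.
have He : is_identity e by apply/s_identities.
rewrite /module_op identity_d // xE (unit_of_component He fE).1.
by rewrite beta_identity //; apply: fE.
Qed.

Lemma module_opM g x y : module_op g (x * y) = module_op g x * module_op g y.
Proof.
rewrite /module_op -(beta_rmorph (unit_of_d_mul_in g x) (unit_of_d_mul_in g y)).2.
congr (beta g _); have Hd := d_is_identity g.
rewrite [RHS]mulrA -(mulrA _ x) -(unit_of_central Hd) [in RHS]mulrA.
by rewrite unit_of_idem // mulrA.
Qed.

Lemma module_op1 g : module_op g 1 = module_op (gr g) 1.
Proof.
have Hr := r_is_identity g.
rewrite /module_op !mulr1 gd_r beta_unit_of (beta_identity Hr) //.
exact: (unit_ofP Hr).1.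
Qed.

Lemma module_op_KG_module_algebra : is_KG_module_algebra s module_op.
Proof.
do !split; [exact: module_opD|exact: module_opZ|exact: module_op_comp|
  exact: module_op_orth|exact: module_op_unital|exact: module_opM|exact: module_op1].
Qed.

End ActionToModuleAlgebra.

Section ModuleAlgebraToAction.
Variables (K : comPzRingType) (R : algType K) (G : groupoid) (s : seq G).
Hypothesis s_uniq : List.NoDup s.
Hypothesis s_identities : forall e : G, List.In e s <-> is_identity e.
Variable L : G -> R -> R.
Hypothesis LD : forall g x y, L g (x + y) = L g x + L g y.
Hypothesis LZ : forall g (k : K) x, L g (k *: x) = k *: L g x.
Hypothesis L_comp : forall g h x, gd g = gr h -> L g (L h x) = L (gmul g h) x.
Hypothesis L_orth : forall g h x, gd g <> gr h -> L g (L h x) = 0.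
Hypothesis L_unital : forall x, \sum_(e <- s) L e x = x.
Hypothesis LM : forall g x y, L g (x * y) = L g x * L g y.

Lemma L_idem e x : is_identity e -> L e (L e x) = L e x.
Proof. by move=> He; rewrite L_comp ?identity_mulss ?identity_d ?identity_r. Qed.

Lemma L_orth_identities e f x : is_identity e -> is_identity f -> e <> f ->
  L e (L f x) = 0.
Proof. by move=> He Hf ef; rewrite L_orth // identity_d // identity_r. Qed.

Lemma L_fixed_of_orth e y : is_identity e ->
  (forall h, List.In h s -> h <> e -> L h y = 0) -> L e y = y.
Proof.
move=> He y0; rewrite -[RHS]L_unital (big_In_single (e := e) s_uniq) //.
exact/s_identities.
Qed.

Lemma L_fixedMl e a x : is_identity e -> L e x = x -> L e (a * x) = a * x.
Proof.
move=> He ex; apply: L_fixed_of_orth => // h /s_identities Hh he.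
by rewrite LM -ex L_orth_identities ?mulr0.
Qed.

Lemma L_fixedMr e a x : is_identity e -> L e x = x -> L e (x * a) = x * a.
Proof.
move=> He ex; apply: L_fixed_of_orth => // h /s_identities Hh he.
by rewrite LM -ex L_orth_identities ?mul0r.
Qed.

(* [E_g = u_{r g} . R], the ideal of elements fixed by [u_{r g}]. *)
Definition fixed_ideal (g : G) (x : R) : Prop := L (gr g) x = x.

Lemma fixed_ideal_ideal g : is_ideal (fixed_ideal g).
Proof.
have Hr := r_is_identity g; rewrite /fixed_ideal; split.
- exact: additive0.
- by move=> x y ex ey; rewrite LD ex ey.
- by move=> x ex; rewrite (additiveN (LD _)) ex.
- by move=> a x; apply: L_fixedMl.
- by move=> a x; apply: L_fixedMr.
Qed.

Lemma fixed_ideal_action : is_groupoid_action fixed_ideal L.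
Proof.
split; first exact: fixed_ideal_ideal.
rewrite /fixed_ideal; split; [|split; [|split; [|split; [|split; [|split; [|split]]]]]].
- by move=> g x; rewrite gr_r.
- by move=> g x _; rewrite L_comp ?gd_r // gr_mul_l.
- by move=> g x y _ _; rewrite LD LM.
- by move=> g k x _; rewrite LZ.
- move=> g x y; rewrite gr_inv => ex ey gxy.
  have undo z : L (ginv g) (L g z) = L (gd g) z by rewrite L_comp ?gd_inv // -gd_def.
  by rewrite -ex -ey -!undo gxy.
- move=> g y ey; exists (L (ginv g) y).
    by rewrite L_comp ?gd_r // gr_mul_l.
  by rewrite L_comp ?gr_inv // -gr_def.
- by move=> e x He; rewrite identity_r.
- by move=> g h x gh _; rewrite L_comp.
Qed.

Lemma fixed_ideal_unital e : is_identity e -> is_unital_ideal (fixed_ideal e).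
Proof.
move=> He; exists (L e 1) => [|x]; rewrite /fixed_ideal identity_r //.
  exact: L_idem.
by move=> ex; split; rewrite -{1}ex -LM ?mul1r ?mulr1.
Qed.

Lemma fixed_ideal_direct_sum : internal_direct_sum s fixed_ideal.
Proof.
rewrite /fixed_ideal; split.
  move=> x; exists (fun e => L e x); split; last by rewrite L_unital.
  by move=> e /s_identities He; rewrite identity_r // L_idem.
move=> f fE f0 i si; have Hi : is_identity i by apply/s_identities.
have fixed j : List.In j s -> L j (f j) = f j.
  by move=> sj; have := fE j sj; rewrite identity_r //; apply/s_identities.
have := congr1 (L i) f0; rewrite (big_morph (L i) (LD i) (additive0 (LD i))).
rewrite (big_In_single s_uniq si) ?fixed ?(additive0 (LD i)) // => j sj ji.
by rewrite -fixed // L_orth_identities //; [exact/s_identities | move=> ij; apply: ji].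
Qed.

End ModuleAlgebraToAction.

Theorem proposition2p2 (K : comPzRingType) (R : algType K) (G : groupoid)
    (s : seq G) (Hs : enumerates_identities s) :
  (exists (E : G -> R -> Prop) (beta : G -> R -> R),
      is_groupoid_action E beta /\
      (forall e, is_identity e -> is_unital_ideal (E e)) /\
      internal_direct_sum s E)
  <->
  (exists L : G -> R -> R, is_KG_module_algebra s L).
Proof.
case: Hs => s_uniq s_identities; split.
- case=> E [beta [[E_ideal [E_r [beta_in [beta_rmorph [betaZ [_ [beta_onto
    [beta_identity beta_comp]]]]]]]] [E_unital [E_decomp E_indep]]]].
  exists (module_op E beta).
  exact: (module_op_KG_module_algebra s_uniq s_identities E_ideal E_r beta_in
    beta_rmorph betaZ beta_onto beta_identity beta_comp E_unital E_decomp E_indep).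
- case=> L [LD [LZ [L_comp [L_orth [L_unital [LM _]]]]]].
  exists (fixed_ideal L), L; split; last split.
  + exact: (fixed_ideal_action s_uniq s_identities LD LZ L_comp L_orth L_unital LM).
  + by move=> e; apply: fixed_ideal_unital.
  + exact: (fixed_ideal_direct_sum s_uniq s_identities LD L_comp L_orth L_unital).
Qed.
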